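(* Let $G$ be a graph on at least two vertices and let $\overline{G}$ be its complement. Then $|\gamma^{DLD}(G)-\gamma^{DLD}(\overline{G})|\le 1$, and $\gamma^{DLD}(G)\ne\gamma^{DLD}(\overline{G})$ if and only if $G$ is a complete graph or an edgeless graph.
   Context: All graphs are finite, simple and undirected (not necessarily connected). For $u\in V$, $N(u)$ is the set of neighbours of $u$ and $N[u]=N(u)\cup\{u\}$. A code is a non-empty subset $C\subseteq V$; $I(C;u)=N[u]\cap C$ (computed in the relevant graph). A code $C$ is solid-locating-dominating if $I(C;u)\ne\emptyset$ for every $u\in V\setminus C$ and $I(C;u)\not\subseteq I(C;v)$ for all distinct $u,v\in V\setminus C$; $\gamma^{DLD}(G)$ is the minimum size of such a code in $G$. *)

(* A simple graph on a finite vertex type T is a symmetric,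
   irreflexive relation e : rel T. *)
From mathcomp Require Import all_boot.
Set Implicit Arguments. Unset Strict Implicit. Unset Printing Implicit Defensive.

Definition compl_graph (T : finType) (e : rel T) : rel T :=
  fun x y => (x != y) && ~~ e x y.

Definition cnbhd (T : finType) (e : rel T) (u : T) : {set T} :=
  [set v | (v == u) || e u v].

Definition Icode (T : finType) (e : rel T) (C : {set T}) (u : T) : {set T} :=
  cnbhd e u :&: C.

Definition is_DLD (T : finType) (e : rel T) (C : {set T}) : bool :=
  [&& C != set0,
      [forall u in ~: C, Icode e C u != set0] &
      [forall u in ~: C, forall v in ~: C,
          (u != v) ==> ~~ (Icode e C u \subset Icode e C v)]].

(* gamma^{DLD}: minimum size of a DLD code.  The default value #|T| is
   harmless whenever T is nonempty, since [set: T] is then a DLD code. *)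
Definition gammaDLD (T : finType) (e : rel T) : nat :=
  \big[minn/#|T|]_(C : {set T} | is_DLD e C) #|C|.

Definition complete_graph (T : finType) (e : rel T) : Prop :=
  forall u v : T, u != v -> e u v.

Definition edgeless_graph (T : finType) (e : rel T) : Prop :=
  forall u v : T, ~~ e u v.

(* Outside a code C, the complement graph sees I(C;u) replaced by C minus I(C;u),
   and complementation inside C reverses inclusion; so a solid-locating-dominating
   code of G with at least two non-codewords is one of the complement as well
   (domination comes for free from incomparability).  Hence if one of the two
   parameters is at most n - 2 the other is no larger, and both are equal.
   Otherwise both lie in {n - 1, n}; the value n is attained exactly by
   edgeless graphs, since V minus a vertex with a neighbour is always a code,
   while in an edgeless graph a non-codeword would be undominated. *)
From mathcomp Require Import all_boot all_order zify.
From Stdlib Require Import FunctionalExtensionality.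
Set Implicit Arguments. Unset Strict Implicit. Unset Printing Implicit Defensive.
Import Order.TTheory.

Section SolidLocatingDominating.
Variable T : finType.
Implicit Types (e : rel T) (C : {set T}) (u v : T).

Lemma is_DLDP e C : reflect [/\ C != set0,
  (forall u, u \notin C -> Icode e C u != set0) &
  (forall u v, u \notin C -> v \notin C -> u != v ->
      ~~ (Icode e C u \subset Icode e C v))] (is_DLD e C).
Proof.
apply: (iffP and3P) => [[C0 /forallP dom /forallP loc]|[C0 dom loc]].
- split=> // [u uC | u v uC vC uv]; first by have := dom u; rewrite inE uC.
  by have := loc u; rewrite inE uC => /forallP/(_ v); rewrite inE vC uv.
- split=> //; apply/forallP => u; apply/implyP; rewrite inE => uC; first exact: dom.
  by apply/forallP => v; apply/implyP; rewrite inE => vC; apply/implyP; apply: loc.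
Qed.

Lemma Icode_sub e C u : Icode e C u \subset C.
Proof. exact: subsetIr. Qed.

Lemma Icode_compl_graph e C u : u \notin C ->
  Icode (compl_graph e) C u = C :\: Icode e C u.
Proof.
move=> uC; apply/setP => v; rewrite !inE /compl_graph.
case vC: (v \in C); rewrite ?andbF ?andbT //=.
have /negPf vu : v != u by apply: contraNneq uC => <-.
by rewrite vu eq_sym vu.
Qed.

Lemma pairwise_nsub_neq0 (A : {set T}) (K : T -> {set T}) : 1 < #|A| ->
  {in A &, forall u v, u != v -> ~~ (K u \subset K v)} ->
  {in A, forall u, K u != set0}.
Proof.
move=> A_gt1 incomp u uA; have [v vA vu] : exists2 v, v \in A & v != u.
  have : 0 < #|A :\ u| by rewrite (cardsD1 u) uA in A_gt1.
  by rewrite card_gt0 => /set0Pn[v]; rewrite !inE => /andP[]; exists v.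
have uv : u != v by rewrite eq_sym.
by apply: contraNneq (incomp u v uA vA uv) => ->; rewrite sub0set.
Qed.

Lemma setD_subset_setD (A B1 B2 : {set T}) :
  B2 \subset A -> (A :\: B1 \subset A :\: B2) = (B2 \subset B1).
Proof.
move=> B2A; apply/idP/idP => [/subsetP sub | /setDS //].
apply/subsetP => x xB2; apply/negPn/negP => xB1.
by have := sub x; rewrite !inE xB1 xB2 (subsetP B2A x xB2) => /(_ isT).
Qed.

Lemma is_DLD_compl_graph e C :
  1 < #|~: C| -> is_DLD e C -> is_DLD (compl_graph e) C.
Proof.
move=> C'_gt1 /is_DLDP[C0 _ loc].
have loc' : {in ~: C &, forall u v, u != v ->
    ~~ (Icode (compl_graph e) C u \subset Icode (compl_graph e) C v)}.
  move=> u v; rewrite !inE => uC vC uv.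
  rewrite !Icode_compl_graph // setD_subset_setD ?Icode_sub //.
  by apply: loc; rewrite // eq_sym.
apply/is_DLDP; split=> // [u uC | u v uC vC]; last by apply: loc'; rewrite inE.
by apply: (pairwise_nsub_neq0 C'_gt1 loc'); rewrite inE.
Qed.

Lemma compl_graph_irr e : irreflexive (compl_graph e).
Proof. by move=> x; rewrite /compl_graph eqxx. Qed.

Lemma compl_graphK e : irreflexive e -> compl_graph (compl_graph e) = e.
Proof.
move=> e_irr; apply: functional_extensionality => x.
apply: functional_extensionality => y; rewrite /compl_graph negb_and !negbK.
by case: eqVneq => [->|]; rewrite ?e_irr.
Qed.

Lemma edgeless_compl_graph e : edgeless_graph (compl_graph e) <-> complete_graph e.
Proof.
split=> [edgeless u v uv | complete u v].
  by have := edgeless u v; rewrite /compl_graph uv negbK.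
by rewrite /compl_graph negb_and negbK; case: eqVneq => // /complete ->.
Qed.

Lemma is_DLD_setT e : 0 < #|T| -> is_DLD e [set: T].
Proof.
move=> T_gt0; apply/is_DLDP; split=> [|u|u v]; rewrite ?inE //.
by have [x _] := card_gt0P T_gt0; apply/set0Pn; exists x; rewrite inE.
Qed.

Lemma is_DLD_setC1 e u v : u != v -> e u v -> is_DLD e [set~ u].
Proof.
move=> uv euv; apply/is_DLDP; split.
- by apply/set0Pn; exists v; rewrite !inE eq_sym.
- move=> w; rewrite !inE negbK => /eqP ->; apply/set0Pn; exists v.
  by rewrite !inE euv orbT eq_sym.
- by move=> w1 w2; rewrite !inE !negbK => /eqP -> /eqP ->; rewrite eqxx.
Qed.

Lemma is_DLD_edgeless e C : edgeless_graph e -> is_DLD e C -> C = [set: T].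
Proof.
move=> edgeless /is_DLDP[_ dom _]; apply/setP => u; rewrite inE.
apply/negPn/negP => uC; have [v] := set0Pn _ (dom u uC).
by rewrite !inE (negPf (edgeless u v)) orbF => /andP[/eqP ->]; apply/negP.
Qed.

Lemma gammaDLD_min e C : is_DLD e C -> gammaDLD e <= #|C|.
Proof.
by move=> DLD_C; have := bigmin_le_cond #|T| (fun C => #|C|) DLD_C; rewrite leEnat minEnat.
Qed.

Lemma gammaDLD_le_card e : 0 < #|T| -> gammaDLD e <= #|T|.
Proof. by move=> T_gt0; rewrite -cardsT gammaDLD_min ?is_DLD_setT. Qed.

Lemma gammaDLD_attained e : 0 < #|T| -> exists2 C, is_DLD e C & #|C| = gammaDLD e.
Proof.
move=> T_gt0; have le_cardT C : is_DLD e C -> (#|C| <= #|T|)%O by rewrite leEnat max_card.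
have [C DLD_C] := eq_bigmin [set: T] _ _ (is_DLD_setT e T_gt0) le_cardT.
by rewrite /gammaDLD -minEnat => ->; exists C.
Qed.

Lemma gammaDLD_compl_graph_le e : 0 < #|T| ->
  gammaDLD e <= #|T| - 2 -> gammaDLD (compl_graph e) <= gammaDLD e.
Proof.
move=> T_gt0; have [C DLD_C <-] := gammaDLD_attained e T_gt0 => small.
have C_gt0 : 0 < #|C| by rewrite card_gt0; case/and3P: DLD_C.
by apply/gammaDLD_min/is_DLD_compl_graph => //; move: (cardsC C); lia.
Qed.

Lemma gammaDLD_eq_card e : irreflexive e -> 0 < #|T| ->
  gammaDLD e = #|T| <-> edgeless_graph e.
Proof.
move=> e_irr T_gt0; split=> [gamma_n u v | edgeless].
  apply/negP => euv; have uv : u != v by apply: contraTneq euv => ->; rewrite e_irr.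
  by have := gammaDLD_min (is_DLD_setC1 uv euv); rewrite cardsC1; lia.
have [C DLD_C <-] := gammaDLD_attained e T_gt0.
by rewrite (is_DLD_edgeless edgeless DLD_C) cardsT.
Qed.

Lemma not_edgeless_both e : 1 < #|T| ->
  ~ (edgeless_graph e /\ edgeless_graph (compl_graph e)).
Proof.
move=> /card_gt1P[u [v [_ _ uv]]] [edgeless edgeless'].
by have := edgeless' u v; rewrite /compl_graph uv (negPf (edgeless u v)).
Qed.

End SolidLocatingDominating.

Theorem mainTheorem9 (T : finType) (e : rel T)
  (e_sym : symmetric e) (e_irr : irreflexive e) (hT : 1 < #|T|) :
  (gammaDLD e <= (gammaDLD (compl_graph e)).+1 /\
   gammaDLD (compl_graph e) <= (gammaDLD e).+1) /\
  (gammaDLD e <> gammaDLD (compl_graph e) <->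
   complete_graph e \/ edgeless_graph e).
Proof.
have T_gt0 : 0 < #|T| by apply: ltnW.
have := gammaDLD_le_card e T_gt0; have := gammaDLD_le_card (compl_graph e) T_gt0.
have := gammaDLD_compl_graph_le (e := e) T_gt0.
have := gammaDLD_compl_graph_le (e := compl_graph e) T_gt0; rewrite compl_graphK //.
have := not_edgeless_both (e := e) hT.
rewrite -edgeless_compl_graph -!gammaDLD_eq_card //; last exact: compl_graph_irr.
lia.
Qed.
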